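(* Consider the mixed support-set model described in the context, and let $\mathsf p_1,\dots,\mathsf p_h,\mathsf q_1,\dots,\mathsf q_m$ be $h+m$ distinct sensors. Writing $\phi=\frac{T}{N-T}\epsilon$, $$\Pr\Big(i\in\bigcap_{l=1}^{h}\hat{\mathcal T}_{\mathsf p_l},\ i\in\bigcap_{l=1}^{m}\hat{\mathcal T}_{\mathsf q_l}^{\complement}\Big)=(1-\epsilon)^h\epsilon^m\frac{J}{N}+h(1-\epsilon)\phi^{h-1}(1-\phi)^m\frac{I}{N}+m\,\epsilon\,\phi^{h}(1-\phi)^{m-1}\frac{I}{N}+\phi^{h}(1-\phi)^{m}\frac{N-J-(m+h)I}{N}.$$
   Context: Let $N>T\ge1$ be integers and $\Omega=\{1,\dots,N\}$; complements are taken in $\Omega$. A finite set $\mathcal L$ of sensors is given. Mixed support-set model: there are a fixed set $\mathcal J\subseteq\Omega$ with $|\mathcal J|=J$ and, for each sensor $\mathsf p\in\mathcal L$, a fixed set $\mathcal I_{\mathsf p}\subseteq\Omega$ with $|\mathcal I_{\mathsf p}|=I$, such that $\mathcal I_{\mathsf p}\cap\mathcal J=\emptyset$ for all $\mathsf p$, $\mathcal I_{\mathsf p}\cap\mathcal I_{\mathsf q}=\emptyset$ for $\mathsf p\ne\mathsf q$, and the true support set of sensor $\mathsf p$ is $\mathcal T_{\mathsf p}=\mathcal I_{\mathsf p}\cup\mathcal J$; thus $T=I+J$. Each sensor has a random estimated support set $\hat{\mathcal T}_{\mathsf p}\subseteq\Omega$. A random index $i$ is uniformly distributed on $\Omega$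 and independent of all estimates. System model: there is $\epsilon$ with $0\le\epsilon\le (N-T)/N$, common to all sensors, such that for every sensor $\mathsf p$ and every $j\in\Omega$, $\Pr(j\in\hat{\mathcal T}_{\mathsf p})=1-\epsilon$ if $j\in\mathcal T_{\mathsf p}$ and $\Pr(j\in\hat{\mathcal T}_{\mathsf p})=\frac{T}{N-T}\epsilon$ if $j\notin\mathcal T_{\mathsf p}$ (detection probability $1-\epsilon$, miss probability $\epsilon$, false-alarm probability $\frac{T}{N-T}\epsilon$). For each fixed $j\in\Omega$, the events $\{j\in\hat{\mathcal T}_{\mathsf p}\}$, $\mathsf p\in\mathcal L$, are mutually independent. Convention: $0^0=1$ and a term with coefficient $0$ is $0$. *)

From mathcomp Require Import all_boot all_order all_algebra.
Set Implicit Arguments. Unset Strict Implicit. Unset Printing Implicit Defensive.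
Import Order.TTheory GRing.Theory Num.Theory.
Local Open Scope ring_scope.

Definition is_prob (R : numDomainType) (S : finType) (P : S -> R) : Prop :=
  (forall w, 0 <= P w) /\ \sum_(w : S) P w = 1.

Definition Pr (R : numDomainType) (S : finType) (P : S -> R) (E : pred S) : R :=
  \sum_(w : S | E w) P w.

From mathcomp Require Import all_boot all_order all_algebra.
From mathcomp Require Import ring.
Set Implicit Arguments. Unset Strict Implicit. Unset Printing Implicit Defensive.
Import Order.TTheory GRing.Theory Num.Theory.
Local Open Scope ring_scope.

(* Condition on the value j of the uniform index i, which is independent of
   the estimates.  For fixed j the detection events of the sensors are
   independent, and removing one missed sensor at a time (Pr(A, miss c) =
   Pr(A) - Pr(A, hit c)) shows that they stay independent when some of them
   are complemented; so the probability that every p_l detects j and every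
   q_l misses it is a product of detection and miss probabilities.  As the
   supports I_p are pairwise disjoint and disjoint from J, this product takes
   only four values, according to whether j lies in J, in some I_(p_l), in
   some I_(q_l), or in none of the supports; summing over j with the
   multiplicities J, h I, m I and N - J - (h + m) I gives the formula. *)

Lemma forall_in_setU1 (T : finType) (x : T) (A : {set T}) (Q : pred T) :
  [forall y in x |: A, Q y] = Q x && [forall y in A, Q y].
Proof.
apply/forall_inP/andP => [H|[Qx /forall_inP QA] y /setU1P[->|/QA]] //.
split; first by apply: H; rewrite setU11.
by apply/forall_inP => y Ay; apply: H; rewrite setU1r.
Qed.

Lemma Pr_partition (R : numDomainType) (S K : finType) (P : S -> R)
    (g : S -> K) (E : pred S) :
  Pr P E = \sum_(k : K) Pr P [pred w | (g w == k) && E w].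
Proof.
rewrite /Pr (partition_big g predT) //=; apply: eq_bigr => k _.
by apply: eq_bigl => w /=; rewrite andbC.
Qed.

Definition hit_miss (L S : finType) (Ev : L -> pred S) (A C : {set L}) : pred S :=
  [pred w | [forall s in A, Ev s w] && [forall s in C, ~~ Ev s w]].

Section Independence.

Variables (R : numDomainType) (L S : finType) (P : S -> R) (Ev : L -> pred S).

Lemma Pr_hit_miss_setU1 (c : L) (A C : {set L}) :
  Pr P (hit_miss Ev A (c |: C)) =
  Pr P (hit_miss Ev A C) - Pr P (hit_miss Ev (c |: A) C).
Proof.
suff -> : Pr P (hit_miss Ev A C) =
    Pr P (hit_miss Ev (c |: A) C) + Pr P (hit_miss Ev A (c |: C)).
  by rewrite addrC addKr.
rewrite /Pr (bigID (Ev c)) /=; congr (_ + _); apply: eq_bigl => w;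
  by rewrite /hit_miss /= !forall_in_setU1; case: (Ev c w); rewrite ?andbT ?andbF.
Qed.

Hypothesis Ev_indep : forall A : {set L},
  Pr P [pred w | [forall s in A, Ev s w]] = \prod_(s in A) Pr P (Ev s).

Lemma Pr_hit_miss (A C : {set L}) : [disjoint A & C] ->
  Pr P (hit_miss Ev A C) =
  \prod_(s in A) Pr P (Ev s) * \prod_(s in C) (1 - Pr P (Ev s)).
Proof.
move: {2}#|C| (erefl #|C|) => n; elim: n A C => [|n IH] A C cardC AC.
  move/eqP: cardC; rewrite cards_eq0 => /eqP ->.
  rewrite big_set0 mulr1 -Ev_indep; apply: eq_bigl => w /=.
  by apply/andb_idr => _; apply/forall_inP => s; rewrite inE.
have [c Cc] : exists c, c \in C by apply/set0Pn; rewrite -card_gt0 cardC.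
have cardC' : #|C :\ c| = n by move: cardC; rewrite (cardsD1 c) Cc => -[].
have AC' : [disjoint A & C :\ c] by apply: disjointWr AC; apply: subD1set.
have cA : c \notin A by rewrite (disjointFl AC Cc).
rewrite -(setD1K Cc) Pr_hit_miss_setU1 !IH //; last first.
  by rewrite disjoints_subset subUset sub1set !inE eqxx -disjoints_subset AC'.
rewrite big_setU1 //= big_setU1 ?setD11 //=; ring.
Qed.

Lemma Pr_hit_miss_families (h m : nat) (p : 'I_h -> L) (q : 'I_m -> L) :
  injective p -> injective q -> (forall a b, p a != q b) ->
  Pr P [pred w | [forall l, Ev (p l) w] && [forall l, ~~ Ev (q l) w]] =
  \prod_(l < h) Pr P (Ev (p l)) * \prod_(l < m) (1 - Pr P (Ev (q l))).
Proof.
move=> p_inj q_inj pq.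
have forall_imset k (f : 'I_k -> L) (Q : pred L) :
    [forall s in f @: setT, Q s] = [forall l, Q (f l)].
  apply/forall_inP/forallP => [H l|H _ /imsetP[l _ ->]] //.
  by apply: H; rewrite imset_f.
have prod_imset k (f : 'I_k -> L) (F : L -> R) : injective f ->
    \prod_(s in f @: setT) F s = \prod_(l < k) F (f l).
  move=> f_inj; rewrite big_imset => [|? ? _ _ /f_inj] //.
  by apply: eq_bigl => l; rewrite inE.
rewrite -(prod_imset _ p (fun s => Pr P (Ev s))) //.
rewrite -(prod_imset _ q (fun s => 1 - Pr P (Ev s))) // -Pr_hit_miss.
  by apply: eq_bigl => w; rewrite /hit_miss /= !forall_imset.
rewrite disjoints_subset; apply/subsetP => _ /imsetP[a _ ->]; rewrite inE.
by apply/imsetP => -[b _ /eqP]; rewrite (negbTE (pq a b)).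
Qed.

End Independence.

Lemma prod_if_disjoint (R : comPzSemiRingType) (T K : finType)
    (F : K -> {set T}) (x : T) (a b : R) :
  (forall i j, i != j -> [disjoint F i & F j]) ->
  \prod_(i : K) (if x \in F i then a else b) =
  if [exists i, x \in F i] then a * b ^+ #|K|.-1 else b ^+ #|K|.
Proof.
move=> F_disj; case: existsP => [[i Fix]|noF].
  rewrite (bigD1 i) //= Fix (eq_bigr (fun _ => b)) ?prodr_const ?cardC1 //.
  move=> j ji.
  by have /F_disj/disjointFr-> : i != j by rewrite eq_sym.
rewrite (eq_bigr (fun _ => b)) ?prodr_const // => j _.
by case: ifP => // Fjx; case: noF; exists j.
Qed.

Lemma sum_indicator_disjoint (R : pzSemiRingType) (T K : finType)
    (F : K -> {set T}) (x : T) :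
  (forall i j, i != j -> [disjoint F i & F j]) ->
  \sum_(i : K) ((x \in F i)%:R : R) = ([exists i, x \in F i])%:R.
Proof.
move=> F_disj; case: existsP => [[i Fix]|noF].
  rewrite (bigD1 i) //= Fix big1 ?addr0 // => j ji.
  by have /F_disj/disjointFr-> : i != j by rewrite eq_sym.
apply: big1 => j _.
by have /negbTE-> : x \notin F j by apply/negP => Fjx; case: noF; exists j.
Qed.

Lemma sum_indicator (R : pzSemiRingType) (T : finType) (X : {set T}) (c : R) :
  \sum_(x : T) (x \in X)%:R * c = #|X|%:R * c.
Proof.
rewrite -big_distrl -natr_sum /= -sum1_card; congr (_%:R * _).
by rewrite [RHS]big_mkcond; apply: eq_bigr => x _; case: (x \in X).
Qed.

Section Detection.

Variables (R : comPzRingType) (T L : finType).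
Variables (Jset : {set T}) (Iset : L -> {set T}).
Hypothesis IJ_disj : forall s, [disjoint Iset s & Jset].
Hypothesis I_disj : forall s t, s != t -> [disjoint Iset s & Iset t].
Variables (h m : nat) (p : 'I_h -> L) (q : 'I_m -> L).
Hypotheses (p_inj : injective p) (q_inj : injective q).
Hypothesis pq : forall a b, p a != q b.
Variables (pd pf : R).

Definition detection (x : T) (s : L) : R :=
  if x \in Iset s :|: Jset then pd else pf.

(* The value of the hit/miss probability at a point of [Jset], of some
   [Iset (p l)], of some [Iset (q l)], and of no support, respectively. *)
Let cJ := pd ^+ h * (1 - pd) ^+ m.
Let cP := pd * pf ^+ h.-1 * (1 - pf) ^+ m.
Let cQ := pf ^+ h * (1 - pd) * (1 - pf) ^+ m.-1.
Let c0 := pf ^+ h * (1 - pf) ^+ m.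

Lemma disjoint_Iset_inj (K : finType) (f : K -> L) : injective f ->
  forall i j, i != j -> [disjoint Iset (f i) & Iset (f j)].
Proof. by move=> f_inj i j ij; apply: I_disj; rewrite (inj_eq f_inj). Qed.

Lemma detection_hit_miss (x : T) :
  \prod_(l < h) detection x (p l) * \prod_(l < m) (1 - detection x (q l)) =
  c0 + (x \in Jset)%:R * (cJ - c0)
     + \sum_(l < h) (x \in Iset (p l))%:R * (cP - c0)
     + \sum_(l < m) (x \in Iset (q l))%:R * (cQ - c0).
Proof.
rewrite -!big_distrl /= !sum_indicator_disjoint; try exact: disjoint_Iset_inj.
rewrite /detection; case: (boolP (x \in Jset)) => [xJ | xNJ].
  have notI (K : finType) (f : K -> L) : [exists i, x \in Iset (f i)] = false.
    by apply/existsP => -[i]; rewrite (disjointFl (IJ_disj _) xJ).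
  under eq_bigr do rewrite in_setU xJ orbT.
  under [X in _ * X]eq_bigr do rewrite in_setU xJ orbT.
  rewrite !notI !prodr_const !card_ord /cJ /=; ring.
under eq_bigr do rewrite in_setU (negbTE xNJ) orbF.
under [X in _ * X]eq_bigr
  do rewrite in_setU (negbTE xNJ) orbF (fun_if (fun r => 1 - r)).
rewrite !prod_if_disjoint ?card_ord; try exact: disjoint_Iset_inj.
case: existsP => [[i Pix]|_]; case: existsP => [[j Qjx]|_] /=.
- by have := disjointFr (I_disj (pq i j)) Pix; rewrite Qjx.
- rewrite /cP /c0; ring.
- rewrite /cQ /c0; ring.
- rewrite /c0; ring.
Qed.

Variable I : nat.
Hypothesis card_Iset : forall s, #|Iset s| = I.

Lemma sum_detection_hit_miss :
  \sum_(x : T)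
     (\prod_(l < h) detection x (p l) * \prod_(l < m) (1 - detection x (q l))) =
  #|T|%:R * c0 + #|Jset|%:R * (cJ - c0)
  + (h * I)%:R * (cP - c0) + (m * I)%:R * (cQ - c0).
Proof.
have sum_I (K : finType) (f : K -> L) (c : R) :
    \sum_(k : K) \sum_(x : T) (x \in Iset (f k))%:R * c = (#|K| * I)%:R * c.
  under eq_bigr do rewrite sum_indicator card_Iset.
  by rewrite sumr_const -mulrnAl -mulrnA mulnC.
under eq_bigr do rewrite detection_hit_miss.
rewrite !big_split /= sumr_const sum_indicator.
rewrite [X in _ + X + _]exchange_big [X in _ + X]exchange_big /= !sum_I.
by rewrite !card_ord [#|T|%:R * _]mulr_natl.
Qed.

End Detection.

Theorem lemma3 (R : realFieldType) (N T I J : nat) (L : finType)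
  (Jset : {set 'I_N}) (Iset : L -> {set 'I_N})
  (S : finType) (P : S -> R)
  (est : L -> S -> {set 'I_N}) (idx : S -> 'I_N) (eps : R)
  (h m : nat) (p : 'I_h -> L) (q : 'I_m -> L) :
  (T < N)%N -> (1 <= T)%N -> T = (I + J)%N ->
  #|Jset| = J ->
  (forall s, #|Iset s| = I) ->
  (forall s, [disjoint Iset s & Jset]) ->
  (forall s t, s != t -> [disjoint Iset s & Iset t]) ->
  is_prob P ->
  0 <= eps -> eps <= (N%:R - T%:R) / N%:R ->
  (forall s (j : 'I_N),
      Pr P [pred w | j \in est s w] =
      if j \in Iset s :|: Jset then 1 - eps
      else T%:R / (N%:R - T%:R) * eps) ->
  (forall (j : 'I_N) (A : {set L}),
      Pr P [pred w | [forall s in A, j \in est s w]] =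
      \prod_(s in A) Pr P [pred w | j \in est s w]) ->
  (forall j : 'I_N, Pr P [pred w | idx w == j] = 1 / N%:R) ->
  (forall (j : 'I_N) (B : {set {ffun L -> {set 'I_N}}}),
      Pr P [pred w | (idx w == j) && ([ffun s => est s w] \in B)] =
      Pr P [pred w | idx w == j] * Pr P [pred w | [ffun s => est s w] \in B]) ->
  injective p -> injective q -> (forall a b, p a != q b) ->
  let phi := T%:R / (N%:R - T%:R) * eps in
  Pr P [pred w | [forall l, idx w \in est (p l) w] &&
                 [forall l, idx w \notin est (q l) w]] =
    (1 - eps) ^+ h * eps ^+ m * (J%:R / N%:R)
  + h%:R * (1 - eps) * phi ^+ h.-1 * (1 - phi) ^+ m * (I%:R / N%:R)
  + m%:R * eps * phi ^+ h * (1 - phi) ^+ m.-1 * (I%:R / N%:R)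
  + phi ^+ h * (1 - phi) ^+ m
      * ((N%:R - J%:R - (m + h)%:R * I%:R) / N%:R).
Proof.
move=> N_gt_T _ -> card_J card_I IJ_disj I_disj _ _ _ marg indep unif idx_indep
  p_inj q_inj pq phi.
pose hits j w :=
  [forall l, j \in est (p l) w] && [forall l, j \notin est (q l) w].
have Pr_idx_hits j : Pr P [pred w | (idx w == j) && hits (idx w) w] =
    1 / N%:R * Pr P [pred w | hits j w].
  pose B := [set f : {ffun L -> {set 'I_N}} |
              [forall l, j \in f (p l)] && [forall l, j \notin f (q l)]].
  have inB w : ([ffun s => est s w] \in B) = hits j w.
    by rewrite inE /hits; congr andb; apply: eq_forallb => l; rewrite ffunE.
  rewrite -(unif j) -[Pr P [pred w | hits j w]](eq_bigl _ _ inB) -idx_indep.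
  by apply: eq_bigl => w /=; rewrite inB; case: eqP => // ->.
have Pr_hits j : Pr P [pred w | hits j w] =
    \prod_(l < h) detection Jset Iset (1 - eps) phi j (p l)
    * \prod_(l < m) (1 - detection Jset Iset (1 - eps) phi j (q l)).
  rewrite (Pr_hit_miss_families (Ev := fun s => [pred w | j \in est s w])) //.
    by congr (_ * _); apply: eq_bigr => l _; rewrite marg.
  exact: indep.
rewrite (Pr_partition _ idx).
under eq_bigr do rewrite Pr_idx_hits Pr_hits.
rewrite -big_distrr.
rewrite (sum_detection_hit_miss IJ_disj I_disj p_inj q_inj pq _ _ card_I).
have N_neq0 : N%:R != 0 :> R by rewrite pnatr_eq0 -lt0n (leq_ltn_trans _ N_gt_T).
rewrite /= card_ord card_J !natrM natrD subKr.
by clearbody phi; field.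
Qed.
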